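(* Let $Y/X$ be a Galois cover of finite digraphs with abelian Galois group $G=\mathrm{Gal}(Y/X)$, and let $F$ be an algebraically closed field of characteristic zero. Then $$g_Y(u)=g_X(u)\prod_{\substack{\psi\in\widehat G(F)\\ \psi\neq\psi_0}}g_{Y/X}(u,\psi).$$
   Context: Digraph $X=(V_X,E_X)$ with incidence $e\mapsto(o(e),t(e))$; strongly connected means a directed path exists between any two distinct vertices. A cover $f:Y\to X$ is a morphism surjective on vertices and bijective from edges with origin $w$ (resp. terminus $w$) onto edges with origin $f(w)$ (resp. terminus $f(w)$) for each $w\in V_Y$. $\mathrm{Aut}(Y/X)$ is the group of digraph automorphisms $\sigma$ of $Y$ with $f\circ\sigma=f$; the cover is Galois if $X,Y$ are strongly connected and $\mathrm{Aut}(Y/X)$ acts transitively on each fibre $f^{-1}(v)$, and then $\mathrm{Gal}(Y/X)=\mathrm{Aut}(Y/X)$; it acts freely on $V_Y$. $\mathcal{A}_Y(w)=\sum_{o(\varepsilon)=w}t(\varepsilon)$; $g_Y(u)=\det(\mathcal{I}-\mathcal{A}_Yu)$, similarly $g_X$. $\gamma_{Y/X}(u)=\det_{\mathbb{Z}[G][u]}(\mathcal{I}-\mathcal{A}_Yu)$, computed on the free $\mathbb{Z}[G][u]$-module $\mathbb{Z}V_Y[u]$. $\widehat G(F)=\mathrm{Hom}(G,F^\times)$, $\psi_0$ the trivial character, and $g_{Y/X}(u,\psi)\in F[u]$ is obtained by applying $\psi$ to the coefficients of $\gamma_{Y/X}(u)$. *)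

From HB Require Import structures.
From mathcomp Require Import all_boot all_order all_algebra all_fingroup all_solvable.
Set Implicit Arguments.
Unset Strict Implicit.
Unset Printing Implicit Defensive.
Import GRing.Theory.
Local Open Scope ring_scope.

(* A finite digraph (multiple edges and loops allowed): finite vertex set,
   finite edge set, origin map o = dsrc and terminus map t = dtgt. *)
Record digraph := Digraph {
  dvert : finType;
  dedge : finType;
  dsrc : dedge -> dvert;
  dtgt : dedge -> dvert }.

Definition dadj (X : digraph) : rel (dvert X) :=
  fun v w => [exists e : dedge X, (dsrc e == v) && (dtgt e == w)].

Definition strongly_connected (X : digraph) : Prop :=
  forall v w : dvert X, v != w -> connect (@dadj X) v w.

Section Cover.
Variables (X Y : digraph) (fv : dvert Y -> dvert X) (fe : dedge Y -> dedge X).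

Definition is_cover : Prop :=
  [/\ (forall e, dsrc (fe e) = fv (dsrc e) /\ dtgt (fe e) = fv (dtgt e)),
      (forall v : dvert X, exists w, fv w = v),
      (forall w : dvert Y,
          {in [pred e | dsrc e == w] &, injective fe} /\
          (forall e' : dedge X, dsrc e' = fv w -> exists2 e, dsrc e = w & fe e = e')) &
      (forall w : dvert Y,
          {in [pred e | dtgt e == w] &, injective fe} /\
          (forall e' : dedge X, dtgt e' = fv w -> exists2 e, dtgt e = w & fe e = e'))].

Definition autT := ({perm dvert Y} * {perm dedge Y})%type.

Definition is_aut_over (sg : autT) : bool :=
  [&& [forall e, (dsrc (sg.2 e) == sg.1 (dsrc e)) && (dtgt (sg.2 e) == sg.1 (dtgt e))],
      [forall w, fv (sg.1 w) == fv w] &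
      [forall e, fe (sg.2 e) == fe e]].

Definition Aut_set : {set autT} := [set sg | is_aut_over sg].

Lemma Aut_group_set : group_set Aut_set.
Proof.
apply/group_setP; split.
  rewrite inE; apply/and3P; split; apply/forallP => x /=; rewrite ?perm1 ?eqxx //.
move=> [s1 s2] [t1 t2]; rewrite !inE => /and3P[/forallP Hs /forallP Hs1 /forallP Hs2].
move=> /and3P[/forallP Ht /forallP Ht1 /forallP Ht2].
apply/and3P; split; apply/forallP => x /=; rewrite !permM.
- have /andP[/eqP a /eqP b] := Hs x; have /andP[/eqP c /eqP d] := Ht (s2 x).
  by rewrite c d a b !eqxx.
- by rewrite (eqP (Ht1 _)) (eqP (Hs1 _)).
- by rewrite (eqP (Ht2 _)) (eqP (Hs2 _)).
Qed.

Canonical Aut_group := Group Aut_group_set.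

Definition is_galois_cover : Prop :=
  [/\ is_cover, strongly_connected X, strongly_connected Y &
      forall w w' : dvert Y, fv w = fv w' -> exists2 sg, sg \in Aut_set & sg.1 w = w'].

Definition Gal : {group autT} := Aut_group.

Definition galT := subg_of Gal.

(* --- the group ring Z[G][u], realised as functions G -> Z[u] --- *)
Definition grone : {ffun galT -> {poly int}} := [ffun g : galT => ((g == 1%g)%:R : {poly int})].
Definition grmul (a b : {ffun galT -> {poly int}}) : {ffun galT -> {poly int}} :=
  [ffun g => \sum_(h : galT) a h * b (h^-1 * g)%g].

(* Given a section s of fv (one vertex in each fibre = a Z[G]-basis of Z V_Y),
   the matrix of I - A_Y u over Z[G][u]: entry (i, j) is the coefficient of
   s(i) in (I - A_Y u)(s(j)); the coefficient of g in A_Y(s j) at s i counts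
   the edges e with o(e) = s j and t(e) = g . s i. *)
Definition IAmx (s : dvert X -> dvert Y) (i j : dvert X) : {ffun galT -> {poly int}} :=
  [ffun g => ((i == j) && (g == 1%g))%:R%:P
       - 'X * (#|[set e : dedge Y | (dsrc e == s j) &&
                         (dtgt e == (sgval g : autT).1 (s i))]|%:R)%:P].

(* gamma_{Y/X}(u) = det_{Z[G][u]} (I - A_Y u), Leibniz formula *)
Definition gammaYX (s : dvert X -> dvert Y) : {ffun galT -> {poly int}} :=
  \sum_(p : {perm dvert X})
     [ffun g : galT => (-1) ^+ p * (\big[grmul/grone]_(i : dvert X) IAmx s i (p i)) g].

Definition is_character (F : fieldType) (psi : {ffun galT -> F}) : Prop :=
  (forall x y : galT, psi (x * y)%g = psi x * psi y) /\ (forall x, psi x != 0).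

Definition psi0 (F : fieldType) : {ffun galT -> F} := [ffun _ => 1].

Definition gYX (F : fieldType) (s : dvert X -> dvert Y) (psi : {ffun galT -> F}) : {poly F} :=
  \sum_(g : galT) psi g *: map_poly (fun z : int => z%:~R) (gammaYX s g).

End Cover.

(* g_X(u) = det(I - A_X u) in Z[u]; A_X(w) = sum_{o(e)=w} t(e) *)
Definition gpoly (X : digraph) : {poly int} :=
  \det (\matrix_(i < #|dvert X|, j < #|dvert X|)
          ((i == j)%:R%:P - 'X * (#|[set e : dedge X | (dsrc e == enum_val j) &&
                                      (dtgt e == enum_val i)]|%:R)%:P)).

From HB Require Import structures.
From mathcomp Require Import all_boot all_order all_algebra all_fingroup all_solvable.
From mathcomp Require Import mxrepresentation ring.
Set Implicit Arguments.
Unset Strict Implicit.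
Unset Printing Implicit Defensive.
Import GRing.Theory.
Local Open Scope ring_scope.

(** Fix a section [s] of the cover.  Since [Gal(Y/X)] acts freely and
    transitively on fibres, [(g, v) |-> g.(s v)] identifies [V_Y] with
    [G * V_X], and in these coordinates [I - A_Y u] is a [G]-circulant block
    matrix: its [((g,k),(h,l))] entry depends only on [k], [l] and [g h^-1], and
    it is the [(k,l)] entry of the matrix over [Z[G][u]] whose determinant is
    [gamma_{Y/X}].  For abelian [G] and [F] algebraically closed of
    characteristic zero there are exactly [|G|] characters, and conjugating by
    the character table block-diagonalises such a matrix (Dedekind's group
    determinant), the [psi]-block being the image of the [Z[G][u]]-matrix under
    [psi].  As [psi] is a ring morphism, that block has determinant
    [g_{Y/X}(u, psi)]; for the trivial character the fibre sums of edge counts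
    are the edge counts of [X], giving [g_X(u)]. *)

Lemma sum_delta (R : pzSemiRingType) (I : finType) (i : I) (f : I -> R) :
  \sum_j (i == j)%:R * f j = f i.
Proof.
rewrite (bigD1 i) //= eqxx mul1r big1 ?addr0 // => j.
by rewrite eq_sym => /negbTE->; rewrite mul0r.
Qed.

Lemma sum_pair (V : nmodType) (I J : finType) (F : I * J -> V) :
  \sum_p F p = \sum_i \sum_j F (i, j).
Proof. by rewrite pair_bigA; apply: eq_bigr => -[]. Qed.

Lemma card_set_sum (T : finType) (P : pred T) : #|[set x | P x]| = (\sum_x P x)%N.
Proof.
by rewrite -sum1_card big_mkcond; apply: eq_bigr => x _; rewrite inE; case: (P x).
Qed.

(** * Leibniz determinants over finite index types *)

Section LeibnizDeterminant.
Variable R : comPzRingType.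

(* [\det] only accepts ['I_n]-indexed matrices; [gammaYX] is a Leibniz
   expansion over [{perm dvert X}]. *)
Definition fdet (T : finType) (a : T -> T -> R) : R :=
  \sum_(p : {perm T}) (-1) ^+ p * \prod_i a i (p i).

Lemma eq_fdet (T : finType) (a b : T -> T -> R) :
  (forall x y, a x y = b x y) -> fdet a = fdet b.
Proof.
by move=> eq_ab; apply: eq_bigr => p _; congr (_ * _); apply: eq_bigr.
Qed.

Lemma det_fdet n (A : 'M[R]_n) : \det A = fdet (fun i j => A i j).
Proof. by rewrite /determinant; unlock. Qed.

Section Transport.
Variables (T1 T2 : finType) (f : T1 -> T2) (g : T2 -> T1).
Hypotheses (fK : cancel f g) (gK : cancel g f).

Lemma transport_perm_inj (p : {perm T2}) : injective (fun x => g (p (f x))).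
Proof. by move=> x y /(can_inj gK) /perm_inj /(can_inj fK). Qed.

Definition transport_perm (p : {perm T2}) : {perm T1} :=
  perm (@transport_perm_inj p).

Lemma transport_permE p x : transport_perm p x = g (p (f x)).
Proof. by rewrite permE. Qed.

Lemma transport_permM : {morph transport_perm : p q / (p * q)%g}.
Proof. by move=> p q; apply/permP => x; rewrite permM !transport_permE permM gK. Qed.

Lemma transport_perm1 : transport_perm 1%g = 1%g.
Proof. by apply/permP => x; rewrite transport_permE !perm1 fK. Qed.

Lemma transport_tperm a b : transport_perm (tperm a b) = tperm (g a) (g b).
Proof.
apply/permP => x; rewrite transport_permE.
case: (tpermP a b (f x)) => [<- | <- | /eqP Na /eqP Nb]; rewrite ?fK ?tpermL ?tpermR //.
by rewrite tpermD // -(can_eq fK) gK eq_sym.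
Qed.

Lemma odd_transport_perm p : odd_perm (transport_perm p) = odd_perm p.
Proof.
have [ts -> dts] := prod_tpermP p.
rewrite odd_perm_prod // (big_morph _ transport_permM transport_perm1).
under eq_bigr do rewrite transport_tperm.
rewrite -(big_map (fun t => (g t.1, g t.2)) xpredT (fun t => tperm t.1 t.2)).
rewrite odd_perm_prod ?size_map //.
by apply/allP => _ /mapP[t /(allP dts) dt ->]; rewrite /dpair /= (can_eq gK).
Qed.

Lemma transport_perm_bij : bijective transport_perm.
Proof.
have inj (q : {perm T1}) : injective (fun y => f (q (g y))).
  by move=> x y /(can_inj fK) /perm_inj /(can_inj gK).
exists (fun q => perm (inj q)) => [p | q]; apply/permP => x.
  by rewrite permE /= transport_permE !gK.
by rewrite transport_permE permE /= !fK.
Qed.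

Lemma fdet_transport (a : T2 -> T2 -> R) :
  fdet (fun x y => a (f x) (f y)) = fdet a.
Proof.
rewrite /fdet (reindex transport_perm); last exact/onW_bij/transport_perm_bij.
apply: eq_bigr => p _; rewrite odd_transport_perm; congr (_ * _).
rewrite (reindex g); last by apply/onW_bij; exists f.
by apply: eq_bigr => y _; rewrite transport_permE !gK.
Qed.

End Transport.

Lemma fdet_enum (T : finType) (a : T -> T -> R) :
  \det (\matrix_(i, j < #|T|) a (enum_val i) (enum_val j)) = fdet a.
Proof.
rewrite det_fdet -(fdet_transport (@enum_valK T) (@enum_rankK T)).
by apply: eq_fdet => i j; rewrite mxE.
Qed.

Lemma det_castmx n1 n2 (e : n1 = n2) (A : 'M[R]_n1) : \det (castmx (e, e) A) = \det A.
Proof. by case: n2 / e; rewrite castmx_id. Qed.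

Lemma det_mxdiag K (p_ : 'I_K -> nat) (B : forall i, 'M[R]_(p_ i)) :
  \det (\mxdiag_i B i) = \prod_i \det (B i).
Proof.
elim: K p_ B => [|K IHK] p_ B; last first.
  by rewrite mxdiag_recl det_castmx det_ublock IHK big_ord_recl.
have det_empty n (M : 'M[R]_n) : n = 0%N -> \det M = 1 by move=> n0; subst n; exact: det_mx00.
by rewrite [RHS]big_ord0 det_empty // big_ord0.
Qed.

Import tagnat.

Lemma fdet_block_diag_ord K (T : finType) (A : 'I_K -> T -> T -> R) :
  fdet (fun x y : 'I_K * T => (x.1 == y.1)%:R * A x.1 x.2 y.2) =
  \prod_a fdet (A a).
Proof.
pose p_ (a : 'I_K) := #|T|.
pose B a : 'M[R]_(p_ a) := \matrix_(i, j < #|T|) A a (enum_val i) (enum_val j).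
under [RHS]eq_bigr do rewrite -fdet_enum.
rewrite -(det_mxdiag B) det_fdet.
pose f (x : 'I_K * T) := Rank x.1 (enum_rank x.2 : 'I_(p_ x.1)).
pose g (s : 'I_(\sum_a p_ a)) := (sig1 s, enum_val (sig2 s : 'I_#|T|)).
have sig2_Rank a (k : 'I_#|T|) : (sig2 (Rank a (k : 'I_(p_ a))) : 'I_#|T|) = k.
  by apply: val_inj; rewrite Rank2K.
have fK : cancel f g by move=> [a x]; rewrite /f /g /= Rank1K sig2_Rank enum_rankK.
have gK : cancel g f by move=> s; rewrite /f /g /= enum_valK sig2K.
rewrite -(fdet_transport fK gK); apply: eq_fdet => x y.
rewrite /f /mxdiag /mxblock mxE !Rank1K.
case: eqP => [Exy|_]; last by rewrite mxE mul0r.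
rewrite conform_mx_id mul1r; case: y Exy => b y /= <-.
by rewrite sig2_Rank mxE sig2_Rank !enum_rankK.
Qed.

Lemma fdet_block_diag (I T : finType) (A : I -> T -> T -> R) :
  fdet (fun x y : I * T => (x.1 == y.1)%:R * A x.1 x.2 y.2) =
  \prod_a fdet (A a).
Proof.
pose f (x : I * T) := (enum_rank x.1, x.2).
pose g (x : 'I_#|I| * T) := (enum_val x.1, x.2).
have fK : cancel f g by move=> [a x]; rewrite /f /g /= enum_rankK.
have gK : cancel g f by move=> [a x]; rewrite /f /g /= enum_valK.
rewrite -[LHS](fdet_transport gK fK) [RHS](reindex (fun i : 'I_#|I| => enum_val i)) /=; last first.
  by apply/onW_bij; exists enum_rank; [exact: enum_valK | exact: enum_rankK].
rewrite -fdet_block_diag_ord; apply: eq_fdet => -[a x] [b y].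
by rewrite /= (inj_eq enum_val_inj).
Qed.

Lemma fdet_conj (T1 T2 : finType) (eT : #|T1| = #|T2|)
  (P : T2 -> T1 -> R) (B : T1 -> T1 -> R) (Q : T1 -> T2 -> R) :
  (forall x z, \sum_y P x y * Q y z = (x == z)%:R) ->
  fdet (fun x z => \sum_y \sum_w P x y * B y w * Q w z) = fdet B.
Proof.
move=> PQ.
pose e1 : 'I_#|T1| -> T1 := enum_val.
pose e2 (i : 'I_#|T1|) : T2 := enum_val (cast_ord eT i).
have e1_bij : bijective e1 by exists enum_rank; [exact: enum_valK | exact: enum_rankK].
have e2_bij : bijective e2.
  exists (fun x => cast_ord (esym eT) (enum_rank x)) => i.
    by rewrite /e2 enum_valK cast_ordK.
  by rewrite /e2 cast_ordKV enum_rankK.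
have sum_e1 (h : T1 -> R) : \sum_y h y = \sum_l h (e1 l).
  by rewrite (reindex e1) //; exact: onW_bij.
pose MP : 'M[R]_#|T1| := \matrix_(i, j) P (e2 i) (e1 j).
pose MB : 'M[R]_#|T1| := \matrix_(i, j) B (e1 i) (e1 j).
pose MQ : 'M[R]_#|T1| := \matrix_(i, j) Q (e1 i) (e2 j).
have MPQ : MP *m MQ = 1%:M.
  apply/matrixP => i j; rewrite !mxE.
  under eq_bigr do rewrite !mxE.
  by rewrite -(sum_e1 (fun y => P (e2 i) y * Q y (e2 j))) PQ (bij_eq e2_bij).
have [f2 e2K f2K] := e2_bij; have [f1 e1K f1K] := e1_bij.
have -> : fdet B = \det MB.
  by rewrite det_fdet -(fdet_transport e1K f1K); apply: eq_fdet => i j; rewrite mxE.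
have -> : fdet (fun x z => \sum_y \sum_w P x y * B y w * Q w z) = \det (MP *m MB *m MQ).
  rewrite det_fdet -(fdet_transport e2K f2K); apply: eq_fdet => i j.
  rewrite mxE exchange_big sum_e1; apply: eq_bigr => k _.
  by rewrite !mxE mulr_suml sum_e1; apply: eq_bigr => l _; rewrite !mxE.
have detPQ : \det MP * \det MQ = 1 by rewrite -det_mulmx MPQ det1.
by rewrite !det_mulmx -[RHS]mul1r -detPQ; ring.
Qed.

Lemma fdet_conj_kron (I J T : finType) (eIJ : #|I| = #|J|)
    (C : J -> I -> R) (D : I -> J -> R) (B : I * T -> I * T -> R) :
  (forall a b, \sum_g C a g * D g b = (a == b)%:R) ->
  fdet (fun x z : J * T => \sum_g \sum_h C x.1 g * B (g, x.2) (h, z.2) * D h z.1) =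
  fdet B.
Proof.
move=> CD.
pose P (x : J * T) (y : I * T) := (x.2 == y.2)%:R * C x.1 y.1.
pose Q (y : I * T) (z : J * T) := (z.2 == y.2)%:R * D y.1 z.1.
have eIJT : #|{: I * T}| = #|{: J * T}| by rewrite !card_prod eIJ.
rewrite -(@fdet_conj _ _ eIJT P B Q) => [|[a i] [b j]]; last first.
  transitivity (\sum_k (i == k)%:R * ((j == k)%:R * \sum_g C a g * D g b)).
    rewrite sum_pair exchange_big; apply: eq_bigr => k _ /=.
    by rewrite !mulr_sumr; apply: eq_bigr => g _; rewrite /P /Q /=; ring.
  by rewrite sum_delta CD xpair_eqE -mulnb natrM mulrC [j == i]eq_sym.
apply: eq_fdet => -[a i] [b j] /=; rewrite sum_pair; apply: eq_bigr => g _ /=.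
rewrite -[LHS](sum_delta i (fun k => \sum_h C a g * B (g, k) (h, j) * D h b)).
apply: eq_bigr => k _; rewrite sum_pair mulr_sumr; apply: eq_bigr => h _ /=.
rewrite -(sum_delta j (fun l => _ * B (g, k) (h, l) * _)) mulr_sumr.
by apply: eq_bigr => l _; rewrite /P /Q /=; ring.
Qed.

End LeibnizDeterminant.

(** * Linear characters and the group determinant *)

Section LinearCharacters.
Variables (F : fieldType) (gT : finGroupType).

Definition is_lin_char (psi : {ffun gT -> F}) : Prop :=
  (forall x y : gT, psi (x * y)%g = psi x * psi y) /\ (forall x, psi x != 0).

Lemma is_lin_char_one : is_lin_char [ffun _ => 1].
Proof. by split=> [x y | x]; rewrite !ffunE ?mulr1 ?oner_neq0. Qed.

Lemma lin_char1 psi : is_lin_char psi -> psi 1%g = 1.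
Proof.
move=> [psiM psi_neq0]; apply: (mulfI (psi_neq0 1%g)).
by rewrite mulr1 -psiM mulg1.
Qed.

Lemma lin_char_orthogonality psi phi : is_lin_char psi -> is_lin_char phi ->
  \sum_g psi g * (phi g)^-1 = if psi == phi then #|gT|%:R else 0.
Proof.
move=> psi_lin phi_lin; have [[psiM psi0] [phiM phi0]] := (psi_lin, phi_lin).
have [<-|neq_psi] := eqVneq psi phi.
  by rewrite (eq_bigr (fun=> 1)) ?sumr_const // => g _; rewrite mulfV.
have [h psi_phi_h] : exists h, psi h != phi h.
  apply/existsP; apply: contraNT neq_psi; rewrite negb_exists => /forallP eq_h.
  by apply/eqP/ffunP => x; apply/eqP; rewrite -[_ == _]negbK eq_h.
set S := \sum_g _.
have S_fixed : S = psi h * (phi h)^-1 * S.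
  rewrite {1}/S (reindex_inj (mulgI h)) /S mulr_sumr; apply: eq_bigr => g _.
  by rewrite /= psiM phiM invfM; ring.
have : (1 - psi h * (phi h)^-1) * S = 0 by rewrite mulrBl mul1r -S_fixed subrr.
move/eqP; rewrite mulf_eq0 subr_eq0 => /orP[/eqP ratio1|/eqP //].
by case/eqP: psi_phi_h; rewrite -[phi h]mul1r ratio1 mulfVK.
Qed.

Lemma size_lin_chars_le (chars : seq {ffun gT -> F}) :
  #|gT|%:R != 0 :> F -> uniq chars -> (forall psi, psi \in chars -> is_lin_char psi) ->
  (size chars <= #|gT|)%N.
Proof.
move=> cardG_neq0 chars_uniq chars_lin; set K := size chars.
pose chi (a : 'I_K) := chars`_a.
have chi_lin a : is_lin_char (chi a) by apply: chars_lin; rewrite mem_nth.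
pose MP : 'M[F]_(K, #|gT|) := \matrix_(a, j) chi a (enum_val j).
pose MQ : 'M[F]_(#|gT|, K) := \matrix_(j, b) (chi b (enum_val j))^-1.
have MPQ : MP *m MQ = (#|gT|%:R)%:M.
  apply/matrixP => a b; rewrite !mxE; under eq_bigr do rewrite !mxE.
  rewrite -(big_enum_val (fun g => chi a g / chi b g)) (eq_bigl xpredT) //.
  by rewrite lin_char_orthogonality // nth_uniq // mulrb.
apply: leq_trans (rank_leq_col MP); apply: leq_trans (mxrankM_maxl MP MQ).
by rewrite MPQ mxrank_unit // unitmxE det_scalar unitfE expf_neq0.
Qed.

End LinearCharacters.

Section AbelianCharacterCount.
Variables (F : closedFieldType) (gT : finGroupType).
Hypotheses (gT_comm : forall x y : gT, commute x y) (charF0 : [pchar F] =i pred0).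

Lemma size_lin_chars_ge (chars : seq {ffun gT -> F}) :
  (forall psi, is_lin_char psi -> psi \in chars) -> (#|gT| <= size chars)%N.
Proof.
move=> chars_all; pose G := [set: gT]%G.
have cGG : abelian G by apply/centsP => x _ y _; exact: gT_comm.
have F'G : ([pchar F]^'.-group G)%g by apply/pgroupP => p _ _; rewrite inE /= charF0.
have splitG : group_splitting_field F G.
  by move=> n rG irrG; apply: group_closure_closed_field.
apply: (socle_exists (regular_repr F G)) => sG.
have inZ x : x \in 'Z(G)%g by rewrite (center_idP cGG) inE.
pose mode (W : sG) := [ffun x : gT => irr_mode W x].
have mode_lin W : is_lin_char (mode W).
  by split=> [x y|x]; rewrite !ffunE ?irr_modeM ?irr_mode_neq0 ?inZ.
have mode_inj : injective mode.
  move=> V W /ffunP eqVW.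
  rewrite -(irr_reprK_pchar F'G V) -(irr_reprK_pchar F'G W).
  have irr_scalar (U : sG) x : irr_repr U x = (irr_mode U x)%:M.
    exact/irr_center_scalar/inZ.
  move: (irr_repr V) (irr_repr W) (irr_scalar V) (irr_scalar W).
  rewrite !(irr_degree_abelian splitG cGG) => rV rW rV_scalar rW_scalar.
  apply: irr_comp_rsim_pchar => //.
  exists 1%:M; rewrite ?row_free_unit ?unitmx1 // => x Gx.
  by rewrite mulmx1 mul1mx rV_scalar rW_scalar; have := eqVW x; rewrite !ffunE => ->.
have <- : #|sG| = #|gT|.
  rewrite card_irr_pchar //; apply/eqP; have := card_classes_abelian G.
  by rewrite cGG cardsT => /esym.
rewrite cardE -(size_map mode).
apply: uniq_leq_size; first by rewrite map_inj_uniq ?enum_uniq.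
by move=> _ /mapP [W _ ->]; apply: chars_all.
Qed.

Lemma size_lin_chars (chars : seq {ffun gT -> F}) :
  uniq chars -> (forall psi, psi \in chars <-> is_lin_char psi) ->
  size chars = #|gT|.
Proof.
move=> chars_uniq chars_lin; apply/eqP; rewrite eqn_leq size_lin_chars_ge; last first.
  by move=> psi /chars_lin.
rewrite size_lin_chars_le // => [|psi /chars_lin //].
by rewrite (pcharf0P F).1 //; apply/eqP => /card0_eq /(_ 1%g).
Qed.

End AbelianCharacterCount.

Section GroupDeterminant.
Variables (F : fieldType) (R : comAlgType F) (gT : finGroupType) (T : finType).
Variable chars : seq {ffun gT -> F}.
Hypotheses (chars_uniq : uniq chars) (chars_lin : forall psi, psi \in chars -> is_lin_char psi).
Hypotheses (size_chars : size chars = #|gT|) (cardG_neq0 : #|gT|%:R != 0 :> F).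

(* Conjugation by the character table, with rows [psi] and inverse
   [(psi g)^-1 / |G|], turns the [G]-circulant block matrix into the block
   diagonal one whose [psi]-block is [\sum_c psi c *: A _ _ c]. *)
Lemma fdet_group_circulant (A : T -> T -> gT -> R) :
  fdet (fun y w : gT * T => A y.2 w.2 (y.1 * w.1^-1)%g) =
  \prod_(psi <- chars) fdet (fun k l => \sum_c psi c *: A k l c).
Proof.
pose chi (a : 'I_(size chars)) := chars`_a.
have chi_lin a : is_lin_char (chi a) by apply: chars_lin; rewrite mem_nth.
have chi_orth a b : \sum_g chi a g * ((chi b g)^-1 / #|gT|%:R) = (a == b)%:R.
  under eq_bigr do rewrite mulrA.
  by rewrite -mulr_suml lin_char_orthogonality // nth_uniq // -mulrb mulrnAl mulfV.
rewrite (big_nth 0) big_mkord -fdet_block_diag.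
have card_chars : #|gT| = #|'I_(size chars)| by rewrite card_ord size_chars.
rewrite -[LHS](fdet_conj_kron card_chars (C := fun a g => (chi a g)%:A)
                 (D := fun g b => ((chi b g)^-1 / #|gT|%:R)%:A)) => [|a b]; last first.
  under eq_bigr do rewrite mulr_algl scalerA.
  by rewrite -scaler_suml chi_orth scaler_nat.
apply: eq_fdet => -[a i] [b j] /=.
under eq_bigr do under eq_bigr do rewrite mulr_algl mulr_algr scalerA.
rewrite exchange_big /=.
under eq_bigr => h _ do rewrite (reindex_inj (mulIg h)) /=.
under eq_bigr => h _ do under eq_bigr => c _ do
  rewrite mulgK (chi_lin a).1 (mulrC (chi a c)) mulrA -scalerA.
under eq_bigr do rewrite -scaler_sumr.
rewrite -scaler_suml (eq_bigr _ (fun h _ => mulrC _ _)) chi_orth.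
by rewrite scaler_nat mulr_natl.
Qed.
End GroupDeterminant.

(** * Galois covers of digraphs *)

Definition nedges (Z : digraph) (v w : dvert Z) : nat :=
  #|[set e : dedge Z | (dsrc e == v) && (dtgt e == w)]|.

Lemma gpoly_fdet (R : comNzRingType) (Z : digraph) :
  map_poly (fun z : int => z%:~R : R) (gpoly Z) =
  fdet (fun v w : dvert Z => (v == w)%:R%:P - 'X * (nedges w v)%:R%:P).
Proof.
rewrite /gpoly -det_map_mx -fdet_enum; congr (\det _); apply/matrixP => i j.
rewrite !mxE (inj_eq enum_val_inj) rmorphB rmorphM /= map_polyX !map_polyC /=.
by rewrite !rmorph_nat.
Qed.

Section GaloisAction.
Variables (X Y : digraph) (fv : dvert Y -> dvert X) (fe : dedge Y -> dedge X).
Local Notation G := (galT fv fe).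
Local Open Scope group_scope.

Definition gact (g : G) (w : dvert Y) : dvert Y := (sgval g).1 w.
Definition gacte (g : G) (e : dedge Y) : dedge Y := (sgval g).2 e.

Lemma gal_aut_over (g : G) : is_aut_over fv fe (sgval g).
Proof. by have := subgP g; rewrite inE. Qed.

Lemma dsrc_gacte g e : dsrc (gacte g e) = gact g (dsrc e).
Proof. by have /and3P[/forallP/(_ e)/andP[/eqP-> _] _ _] := gal_aut_over g. Qed.

Lemma dtgt_gacte g e : dtgt (gacte g e) = gact g (dtgt e).
Proof. by have /and3P[/forallP/(_ e)/andP[_ /eqP->] _ _] := gal_aut_over g. Qed.

Lemma fv_gact g w : fv (gact g w) = fv w.
Proof. by have /and3P[_ /forallP/(_ w)/eqP-> _] := gal_aut_over g. Qed.

Lemma fe_gacte g e : fe (gacte g e) = fe e.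
Proof. by have /and3P[_ _ /forallP/(_ e)/eqP->] := gal_aut_over g. Qed.

Lemma gact1 w : gact 1 w = w.
Proof. by rewrite /gact perm1. Qed.

Lemma gactM g h w : gact (g * h) w = gact h (gact g w).
Proof. by rewrite /gact permM. Qed.

Lemma gactK g : cancel (gact g) (gact g^-1).
Proof. by move=> w; rewrite -gactM mulgV gact1. Qed.

Lemma gacteK g : cancel (gacte g) (gacte g^-1).
Proof.
move=> e; rewrite /gacte -permM.
by rewrite -[_ * _]/((sgval (g * g^-1)).2) mulgV perm1.
Qed.

Lemma nedges_gact g w w' : nedges (gact g w) (gact g w') = nedges w w'.
Proof.
rewrite /nedges -(card_preimset _ (can_inj (gacteK g))); apply: eq_card => e.
by rewrite !inE dsrc_gacte dtgt_gacte !(can_eq (gactK g)).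
Qed.

Hypothesis galois : is_galois_cover fv fe.

Lemma gact_free g w : gact g w = w -> g = 1.
Proof.
move=> gw; have [[_ _ src_bij _] _ scY _] := galois.
have fix_edge e : gact g (dsrc e) = dsrc e -> gacte g e = e.
  move=> fix_src; have [inj_src _] := src_bij (dsrc e).
  by apply: inj_src; rewrite ?inE ?dsrc_gacte ?fix_src ?fe_gacte.
have fix_adj v v' : dadj v v' -> gact g v = v -> gact g v' = v'.
  case/existsP=> e /andP[/eqP <- /eqP <-] /fix_edge fix_e.
  by rewrite -dtgt_gacte fix_e.
have fix_vert v : gact g v = v.
  have [<- //|/scY/connectP[p + ->]] := eqVneq w v.
  elim: p w gw => //= v' p IHp w' gw' /andP[adj_w'v'].
  exact/IHp/(fix_adj _ _ adj_w'v').
have [fix1 fix2] : (sgval g).1 = 1 /\ (sgval g).2 = 1.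
  by split; apply/permP => x; rewrite perm1; [exact: fix_vert | exact/fix_edge/fix_vert].
by apply: subg_inj; move: fix1 fix2; case: (sgval g) => ? ? /= -> ->.
Qed.

Lemma gact_inj w : injective (gact^~ w).
Proof.
move=> g h /= gh_w; apply/eqP; rewrite eq_mulgV1; apply/eqP/(gact_free (w := w)).
by rewrite gactM gh_w -gactM mulgV gact1.
Qed.

Variable s : dvert X -> dvert Y.
Hypothesis s_section : forall v, fv (s v) = v.

Definition fibre_coord (x : G * dvert X) : dvert Y := gact x.1 (s x.2).

Definition fibre_coord_inv (w : dvert Y) : G * dvert X :=
  (odflt 1 [pick g | gact g (s (fv w)) == w], fv w).

Lemma fibre_coordK : cancel fibre_coord fibre_coord_inv.
Proof.
move=> [g i]; rewrite /fibre_coord /fibre_coord_inv /= fv_gact s_section.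
case: pickP => [g' /eqP/gact_inj -> // | /(_ g)]; by rewrite eqxx.
Qed.

Lemma fibre_coord_invK : cancel fibre_coord_inv fibre_coord.
Proof.
move=> w; rewrite /fibre_coord /fibre_coord_inv /=.
case: pickP => [g /eqP // | no_g].
have [_ _ _ /(_ (s (fv w)) w)] := galois; rewrite s_section => /(_ erefl)[sg Gsg sg_w].
by have := no_g (subg (Gal fv fe) sg); rewrite /gact subgK // sg_w eqxx.
Qed.

Lemma nedges_fibre_coord g k h l :
  nedges (fibre_coord (h, l)) (fibre_coord (g, k)) =
  nedges (s l) (gact (g * h^-1) (s k)).
Proof. by rewrite -(nedges_gact h^-1) !gactK gactM. Qed.

Lemma sum_gact_eq w i : (\sum_g (w == gact g (s i)) = (fv w == i))%N.
Proof.
rewrite -(fibre_coord_invK w); case: (fibre_coord_inv w) => g0 k.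
rewrite fv_gact s_section.
under eq_bigr => g _ do rewrite -[gact g (s i)]/(fibre_coord (g, i))
  (can_eq fibre_coordK) xpair_eqE.
rewrite (bigD1 g0) //= eqxx big1 ?addn0 // => g.
by rewrite eq_sym => /negbTE->.
Qed.

Lemma sum_nedges_fibre i j : (\sum_g nedges (s j) (gact g (s i)))%N = nedges j i.
Proof.
have [[fE _ src_bij _] _ _ _] := galois.
have [src_inj src_onto] := src_bij (s j).
pose S := [set e | (dsrc e == s j) && (fv (dtgt e) == i)].
transitivity #|S|.
  rewrite /nedges card_set_sum; under eq_bigr do rewrite card_set_sum.
  rewrite exchange_big /=; apply: eq_bigr => e _.
  by case: (dsrc e == s j); rewrite ?sum_gact_eq // big1.
rewrite /nedges -(card_in_imset (f := fe)) => [|e1 e2]; last first.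
  by rewrite !inE => /andP[/eqP src1 _] /andP[/eqP src2 _]; apply: src_inj; rewrite inE ?src1 ?src2.
apply: eq_card => e'; rewrite inE; apply/imsetP/andP => [[e] | [/eqP src_e' /eqP tgt_e']].
  by rewrite inE => /andP[/eqP src_e /eqP tgt_e] ->; rewrite (fE e).1 (fE e).2 src_e tgt_e s_section !eqxx.
have [|e src_e fe_e] := src_onto e'; first by rewrite s_section.
by exists e; rewrite // inE src_e -(fE e).2 fe_e tgt_e' !eqxx.
Qed.

End GaloisAction.

Local Notation mapz := (map_poly (fun z : int => z%:~R)).

Section CharacterEvaluation.
Variables (X Y : digraph) (fv : dvert Y -> dvert X) (fe : dedge Y -> dedge X).
Local Notation G := (galT fv fe).
Variables (F : fieldType) (psi : {ffun G -> F}).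
Hypothesis psi_lin : is_lin_char psi.

Definition char_eval (a : {ffun G -> {poly int}}) : {poly F} :=
  \sum_g psi g *: mapz (a g).

Lemma char_eval_sum (I : Type) (r : seq I) (a : I -> {ffun G -> {poly int}}) :
  char_eval (\sum_(i <- r) a i) = \sum_(i <- r) char_eval (a i).
Proof.
rewrite /char_eval exchange_big /=; apply: eq_bigr => g _.
by rewrite sum_ffunE rmorph_sum scaler_sumr.
Qed.

Lemma char_evalMl c (a : {ffun G -> {poly int}}) :
  char_eval [ffun g => c * a g] = mapz c * char_eval a.
Proof.
by rewrite /char_eval mulr_sumr; apply: eq_bigr => g _; rewrite ffunE rmorphM scalerAr.
Qed.

Lemma char_eval_grmul a b : char_eval (grmul a b) = char_eval a * char_eval b.
Proof.
rewrite /char_eval /grmul; under eq_bigr do rewrite ffunE rmorph_sum scaler_sumr.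
rewrite exchange_big mulr_suml; apply: eq_bigr => h _.
rewrite mulr_sumr [RHS](reindex_inj (mulgI h^-1)%g) /=; apply: eq_bigr => g _.
by rewrite rmorphM -scalerAl -scalerAr scalerA -psi_lin.1 mulKVg.
Qed.

Lemma char_eval_grone : char_eval (grone fv fe) = 1.
Proof.
rewrite /char_eval (bigD1 1%g) //= big1 => [|g /negbTE g_neq1]; last first.
  by rewrite ffunE g_neq1 rmorph0 scaler0.
by rewrite ffunE eqxx rmorph1 lin_char1 // scale1r addr0.
Qed.

Lemma char_eval_grprod (T : finType) (a : T -> {ffun G -> {poly int}}) :
  char_eval (\big[@grmul _ _ fv fe/grone fv fe]_i a i) = \prod_i char_eval (a i).
Proof. exact: (big_morph _ char_eval_grmul char_eval_grone). Qed.

Lemma gYX_fdet s : gYX s psi = fdet (fun i j => char_eval (IAmx fv fe s i j)).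
Proof.
rewrite -[gYX s psi]/(char_eval (gammaYX fv fe s)) char_eval_sum.
apply: eq_bigr => p _; rewrite char_evalMl char_eval_grprod.
by rewrite rmorphXn rmorphN1.
Qed.

End CharacterEvaluation.

Section Factorization.
Variables (X Y : digraph) (fv : dvert Y -> dvert X) (fe : dedge Y -> dedge X).
Local Notation G := (galT fv fe).
Variable F : fieldType.
Hypothesis galois : is_galois_cover fv fe.
Variable s : dvert X -> dvert Y.
Hypothesis s_section : forall v, fv (s v) = v.

Lemma gpoly_fibre_coord :
  mapz (gpoly Y) = fdet (fun y w : G * dvert X =>
                           mapz (IAmx fv fe s y.2 w.2 (y.1 * w.1^-1)%g) : {poly F}).
Proof.
rewrite gpoly_fdet -(fdet_transport (fibre_coordK galois s_section)
                                    (fibre_coord_invK galois s_section)).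
apply: eq_fdet => -[g k] [h l] /=.
rewrite (can_eq (fibre_coordK galois s_section)) nedges_fibre_coord ffunE.
rewrite rmorphB rmorphM /= map_polyX !map_polyC /= !rmorph_nat.
by rewrite xpair_eqE andbC -eq_mulgV1.
Qed.

Lemma gYX_psi0 : gYX s (psi0 fv fe F) = mapz (gpoly X).
Proof.
rewrite gYX_fdet ?gpoly_fdet; last exact: is_lin_char_one.
apply: eq_fdet => i j; rewrite /char_eval.
under eq_bigr do rewrite ffunE scale1r ffunE rmorphB rmorphM /= map_polyX !map_polyC /=.
rewrite sumrB -mulr_sumr -!rmorph_sum /= -(sum_nedges_fibre galois s_section).
rewrite (bigD1 1%g) //= big1 => [|g /negbTE->]; last by rewrite andbF.
by rewrite eqxx andbT addr0 !rmorph_nat.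
Qed.

Lemma gpoly_cover_prod (chars : seq {ffun G -> F}) :
  uniq chars -> (forall psi, psi \in chars -> is_lin_char psi) ->
  size chars = #|G| -> #|G|%:R != 0 :> F ->
  mapz (gpoly Y) = \prod_(psi <- chars) gYX s psi.
Proof.
move=> chars_uniq chars_lin size_chars cardG_neq0.
rewrite gpoly_fibre_coord (fdet_group_circulant chars_uniq chars_lin size_chars cardG_neq0
  (fun k l c => mapz (IAmx fv fe s k l c) : {poly F})).
by rewrite big_seq [RHS]big_seq; apply: eq_bigr => psi /chars_lin/gYX_fdet->.
Qed.

End Factorization.

Theorem theorem3p13 (X Y : digraph) (fv : dvert Y -> dvert X) (fe : dedge Y -> dedge X)
  (F : closedFieldType) :
  is_galois_cover fv fe ->
  abelian (Gal fv fe) ->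
  [pchar F] =i pred0 ->
  forall s : dvert X -> dvert Y, (forall v, fv (s v) = v) ->
  forall chars : seq {ffun galT fv fe -> F},
    uniq chars ->
    (forall psi, psi \in chars <-> is_character psi) ->
    map_poly (fun z : int => z%:~R) (gpoly Y) =
      map_poly (fun z : int => z%:~R) (gpoly X) *
      \prod_(psi <- chars | psi != psi0 fv fe F) gYX s psi.
Proof.
move=> galois abelianG charF0 s s_section chars chars_uniq chars_lin.
have commG (x y : galT fv fe) : commute x y.
  by apply: subg_inj; rewrite !sgvalM ?inE //; apply: (centsP abelianG); apply: subgP.
have cardG_neq0 : #|galT fv fe|%:R != 0 :> F.
  by rewrite (pcharf0P F).1 // -lt0n; apply/card_gt0P; exists 1%g.
have size_chars := size_lin_chars commG charF0 chars_uniq chars_lin.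
rewrite (gpoly_cover_prod galois s_section chars_uniq) // => [|psi /chars_lin //].
rewrite (bigD1_seq (psi0 fv fe F)) //=; last exact/chars_lin/is_lin_char_one.
by rewrite gYX_psi0.
Qed.
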